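(* Let $R>0$ and $\Theta=(\alpha,\rho_r,\rho_d,\rho_s,\rho_0,T)$ with $\alpha>1$, $\rho_r,\rho_d,\rho_s,\rho_0>0$, $T>1$, and set $\beta=\rho_d/\rho_r$, $\delta=\rho_s/\rho_r$, $\mu=\rho_0/\rho_r$, $K_{max}(\Theta)=\min\big(\frac T4,\frac1{3\mu},\frac{3\beta}{2\mu}\big)$. Suppose (A) $K_{max}(\Theta)>10$; (D.1) $\rho_r>\frac{\alpha}{2\delta}$; (D.2) $\rho_r>\frac{3\alpha}{4(1+\beta)^2R}\,g^2\!\big(\frac{4R}{3K_{max}(\Theta)}\big)$; (D.3) $\rho_r<\frac{\alpha}{(1+\beta)^2}\frac{g^2(R)}{R}$. Then $\frac38<\frac{\zeta'_{zf}(R,\Theta)}{\zeta'_{csi}(R,\Theta)}<1$.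
   Context: $g(x)=\sqrt{\frac{x}{2^x-1}}\big(2^x x\ln2-2^x+1\big)$, $x>0$. For reals $M>K$, $1\le K\le\tau<T$, let $$\gamma_u=\frac{K+\tau}{2\tau(M-K)}\Big(2^{\frac{R}{K(1-\tau/T)}}-1\Big)+\sqrt{\Big(\frac{K+\tau}{2\tau(M-K)}\Big(2^{\frac{R}{K(1-\tau/T)}}-1\Big)\Big)^2+\frac{2^{\frac{R}{K(1-\tau/T)}}-1}{\tau(M-K)}},$$ $$\frac{R}{\zeta_{zf}(M,K,\tau,R,\Theta)}=\alpha K\gamma_u+\rho_s+K\Big(\rho_d+\frac{8K^2\rho_0}{3T}\Big)+M\Big(\rho_r+2K\rho_0+\frac{4K^2\rho_0}{T}\Big).$$ $\zeta'_{zf}(R,\Theta)$ is the supremum of $\zeta_{zf}(M,K,\tau,R,\Theta)$ over real $(M,K,\tau)$ with $1\le K\le K_{max}(\Theta)$, $K\le\tau<T$, $M>K$. For real $M>K\ge1$, $$\frac{1}{\zeta_{csi}(M,K,R,\Theta)}=\frac1R\Big[\frac{\alpha K}{M-K}\big(2^{R/K}-1\big)+M\rho_r+K\rho_d+\rho_s\Big],$$ and $\zeta'_{csi}(R,\Theta)$ is the maximum of $\zeta_{csi}(M,K,R,\Theta)$ over real $(M,K)$ with $1\le K\le K_{max}(\Theta)$, $M>K$. *)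

From Stdlib Require Import Reals.
Open Scope R_scope.

Definition pow2 (x : R) : R := Rpower 2 x.

Definition g (x : R) : R :=
  sqrt (x / (pow2 x - 1)) * (pow2 x * x * ln 2 - pow2 x + 1).

Definition Kmax (rho_r rho_d rho_0 T : R) : R :=
  let beta := rho_d / rho_r in
  let mu := rho_0 / rho_r in
  Rmin (T / 4) (Rmin (1 / (3 * mu)) (3 * beta / (2 * mu))).

Definition gamma_u (M K tau Rr T : R) : R :=
  let E := pow2 (Rr / (K * (1 - tau / T))) - 1 in
  let c := (K + tau) / (2 * tau * (M - K)) * E in
  c + sqrt (c ^ 2 + E / (tau * (M - K))).

Definition zeta_zf (M K tau Rr alpha rho_r rho_d rho_s rho_0 T : R) : R :=
  Rr / (alpha * K * gamma_u M K tau Rr T + rho_s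
        + K * (rho_d + 8 * K ^ 2 * rho_0 / (3 * T))
        + M * (rho_r + 2 * K * rho_0 + 4 * K ^ 2 * rho_0 / T)).

Definition zeta_csi (M K Rr alpha rho_r rho_d rho_s : R) : R :=
  / ((1 / Rr) * (alpha * K / (M - K) * (pow2 (Rr / K) - 1)
                 + M * rho_r + K * rho_d + rho_s)).

Definition zf_values (Rr alpha rho_r rho_d rho_s rho_0 T : R) (z : R) : Prop :=
  exists M K tau : R,
    1 <= K <= Kmax rho_r rho_d rho_0 T /\ K <= tau < T /\ M > K /\
    z = zeta_zf M K tau Rr alpha rho_r rho_d rho_s rho_0 T.

Definition csi_values (Rr alpha rho_r rho_d rho_s rho_0 T : R) (z : R) : Prop :=
  exists M K : R,
    1 <= K <= Kmax rho_r rho_d rho_0 T /\ M > K /\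
    z = zeta_csi M K Rr alpha rho_r rho_d rho_s.

Definition is_zeta'_zf (Rr alpha rho_r rho_d rho_s rho_0 T z : R) : Prop :=
  is_lub (zf_values Rr alpha rho_r rho_d rho_s rho_0 T) z.

Definition is_zeta'_csi (Rr alpha rho_r rho_d rho_s rho_0 T z : R) : Prop :=
  csi_values Rr alpha rho_r rho_d rho_s rho_0 T z /\
  is_upper_bound (csi_values Rr alpha rho_r rho_d rho_s rho_0 T) z.

(* Write [Rr / zeta] as a power budget.  Minimising the CSI budget over [M] by AM-GM
   leaves [2 sqrt (alpha rho_r K (2^(R/K) - 1)) + K (rho_r + rho_d) + rho_s], a continuous
   function of [K] that attains its minimum at some [Ks] in [[1, Kmax]]; so
   [zeta'_csi = Rr / P(Ks)].  Since [gamma_u >= (2^(R/K) - 1) / (M - K)], every ZF budget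
   exceeds the CSI budget with the same [M, K] by at least [2 rho_0], which gives the upper
   bound [1].  For the lower bound, the pilot length [tau = T/4] together with the best [M]
   gives ZF budgets at most [4 sqrt (alpha rho_r K (2^(4R/(3K)) - 1)) + 2 K (rho_r + rho_d)
   + alpha/2 + rho_s]; with [K = 4 Ks / 3] if [Ks <= 3 Kmax / 4] and [K = Kmax] otherwise,
   this is below [8/3 P(Ks)].  (D.1) absorbs [alpha/2]; the second case needs (D.2) and the
   convexity of [exp]. *)

From Stdlib Require Import Reals Lra Psatz FunctionalExtensionality.
Open Scope R_scope.

Lemma Rdiv_le_contravar c x y : 0 <= c -> 0 < x -> x <= y -> c / y <= c / x.
Proof.
  intros Hc Hx Hxy; unfold Rdiv.
  apply Rmult_le_compat_l; [lra | apply Rinv_le_contravar; lra].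
Qed.

Lemma Rdiv_lt_contravar c x y : 0 < c -> 0 < x -> x < y -> c / y < c / x.
Proof.
  intros Hc Hx Hxy; unfold Rdiv.
  apply Rmult_lt_compat_l; [lra | apply Rinv_lt_contravar; nra].
Qed.

Lemma sqrt_le_of_le_sqr x A : 0 <= x -> A <= x * x -> sqrt A <= x.
Proof. intros Hx H; rewrite <- (sqrt_square x Hx); apply sqrt_le_1_alt; lra. Qed.

Lemma le_sqrt_of_sqr_le x A : 0 <= x -> x * x <= A -> x <= sqrt A.
Proof. intros Hx H; rewrite <- (sqrt_square x Hx); apply sqrt_le_1_alt; lra. Qed.

Lemma two_sqrt_mul_le_add x y : 0 <= x -> 0 <= y -> 2 * sqrt (x * y) <= x + y.
Proof.
  intros Hx Hy.
  assert (Hd := Rle_0_sqr (x - y)); unfold Rsqr in Hd.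
  assert (sqrt (x * y) <= (x + y) / 2) by (apply sqrt_le_of_le_sqr; [lra | nra]).
  lra.
Qed.

Lemma sqrt_quadratic_bounds c s : 0 <= c -> 0 <= s ->
  c <= sqrt (c ^ 2 + 2 * c * s) <= c + s.
Proof.
  intros Hc Hs; split.
  - apply le_sqrt_of_sqr_le; nra.
  - apply sqrt_le_of_le_sqr; nra.
Qed.

Lemma sqrt_balance x y : 0 < x -> 0 < y ->
  x / sqrt (x / y) = sqrt (x * y) /\ sqrt (x / y) * y = sqrt (x * y).
Proof.
  intros Hx Hy.
  assert (Hd : 0 < sqrt (x / y)) by (apply sqrt_lt_R0, Rdiv_lt_0_compat; lra).
  assert (Hdd : sqrt (x / y) * sqrt (x / y) = x / y)
    by (apply sqrt_sqrt; left; apply Rdiv_lt_0_compat; lra).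
  assert (Hdy : sqrt (x / y) * y = sqrt (x * y)).
  { rewrite <- (sqrt_square (sqrt (x / y) * y)) by nra; f_equal.
    replace (sqrt (x / y) * y * (sqrt (x / y) * y)) with (sqrt (x / y) * sqrt (x / y) * y * y)
      by ring.
    rewrite Hdd; field; lra. }
  split; [|exact Hdy].
  rewrite <- Hdy; apply Rmult_eq_reg_r with (sqrt (x / y)); [|lra].
  replace (x / sqrt (x / y) * sqrt (x / y)) with x by (field; lra).
  replace (sqrt (x / y) * y * sqrt (x / y)) with (sqrt (x / y) * sqrt (x / y) * y) by ring.
  rewrite Hdd; field; lra.
Qed.

Lemma exp_convex t x y : 0 <= t <= 1 ->
  exp (t * x + (1 - t) * y) <= t * exp x + (1 - t) * exp y.
Proof.
  intros Ht; set (z := t * x + (1 - t) * y).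
  assert (Hx : exp x = exp z * exp (x - z)) by (rewrite <- exp_plus; f_equal; ring).
  assert (Hy : exp y = exp z * exp (y - z)) by (rewrite <- exp_plus; f_equal; ring).
  assert (Tx := exp_ineq1_le (x - z)); assert (Ty := exp_ineq1_le (y - z)).
  assert (Hz := exp_pos z).
  assert (t * exp z * (1 + (x - z)) + (1 - t) * exp z * (1 + (y - z)) = exp z)
    by (unfold z; ring).
  assert (t * exp z * (1 + (x - z)) <= t * exp z * exp (x - z))
    by (apply Rmult_le_compat_l; nra).
  assert ((1 - t) * exp z * (1 + (y - z)) <= (1 - t) * exp z * exp (y - z))
    by (apply Rmult_le_compat_l; nra).
  rewrite Hx, Hy; lra.
Qed.

(* The chord bound expresses that [(1 - exp (- x)) / x] is nonincreasing. *)
Lemma exp_sub1_ratio a b : 0 < b <= a ->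
  b * exp (b - a) * (exp a - 1) <= a * (exp b - 1).
Proof.
  intros [Hb Hba].
  assert (Ht : 0 <= b / a <= 1).
  { split; [left; apply Rdiv_lt_0_compat; lra|].
    apply Rmult_le_reg_r with a; [lra|]; field_simplify; lra. }
  assert (Hc := exp_convex (b / a) (- a) 0 Ht).
  replace (b / a * - a + (1 - b / a) * 0) with (- b) in Hc by (field; lra).
  rewrite exp_0 in Hc.
  assert (Hab : exp (b - a) * exp a = exp b) by (rewrite <- exp_plus; f_equal; ring).
  assert (Hbb : exp b * exp (- b) = 1) by (rewrite <- exp_plus, <- exp_0; f_equal; ring).
  assert (Hba' : exp b * exp (- a) = exp (b - a)) by (rewrite <- exp_plus; f_equal; ring).
  assert (Hpos : 0 < a * exp b) by (apply Rmult_lt_0_compat; [lra | apply exp_pos]).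
  apply Rmult_le_compat_l with (r := a * exp b) in Hc; [|lra].
  replace (a * exp b * exp (- b)) with a in Hc by (rewrite Rmult_assoc, Hbb; ring).
  replace (a * exp b * (b / a * exp (- a) + (1 - b / a) * 1))
    with (b * (exp b * exp (- a)) + (a - b) * exp b) in Hc by (field; lra).
  rewrite Hba' in Hc.
  replace (b * exp (b - a) * (exp a - 1)) with (b * exp b - b * exp (b - a))
    by (rewrite <- Hab; ring).
  lra.
Qed.
(* The value at [0] of [exp] minus its tangent line at [u]; it is the second factor of [g]
   (see [g_sqr]). *)
Definition exp_tangent_gap (u : R) : R := u * exp u - exp u + 1.

Lemma exp_tangent_gap_ge0 u : 0 <= exp_tangent_gap u.
Proof.
  assert (H := exp_ineq1_le (- u)).
  assert (E : exp u * exp (- u) = 1) by (rewrite <- exp_plus, <- exp_0; f_equal; ring).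
  assert (Hp := exp_pos u).
  unfold exp_tangent_gap; nra.
Qed.

Lemma exp_tangent_gap_eq u : exp_tangent_gap u = (u - 1) * (exp u - 1) + u.
Proof. unfold exp_tangent_gap; ring. Qed.

(* The case [Ks > 3 Kmax / 4] of the lower bound, divided by [alpha rho_r Kmax], with
   [a = 4 R ln 2 / (3 Kmax)] and [b = R ln 2 / Ks]. *)
Lemma exp_gap_ineq a b : 0 < b -> b < a -> 4 * (a - b) <= a ->
  4 * (exp a - 1) <= 2 * (a - b) / b * exp_tangent_gap a
                     + 16 / 3 * sqrt (3 * a / (4 * b) * (exp b - 1) * (exp a - 1)).
Proof.
  intros Hb Hba Ha4.
  set (w := a - b); set (nu := exp (- (w / 2))); set (E := exp a - 1).
  assert (HE : 0 < E) by (unfold E; rewrite <- exp_0; apply Rlt_0_minus, exp_increasing; lra).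
  assert (Hnu : 0 < nu) by apply exp_pos.
  assert (Hnu_lin : 1 - w / 2 <= nu) by (unfold nu; assert (H := exp_ineq1_le (- (w / 2))); lra).
  assert (Hnu2 : nu * nu = exp (b - a)) by (unfold nu, w; rewrite <- exp_plus; f_equal; field).
  assert (HP := exp_tangent_gap_ge0 a).
  assert (Hsqrt : 6 / 7 * nu * E <= sqrt (3 * a / (4 * b) * (exp b - 1) * E)).
  { apply le_sqrt_of_sqr_le; [nra|].
    assert (Hr := exp_sub1_ratio a b ltac:(lra)); fold E in Hr.
    assert (Hr' : exp (b - a) * E <= a / b * (exp b - 1)).
    { apply Rmult_le_reg_l with b; [lra|].
      replace (b * (a / b * (exp b - 1))) with (a * (exp b - 1)) by (field; lra); lra. }
    replace (3 * a / (4 * b) * (exp b - 1) * E) with (3 / 4 * (a / b * (exp b - 1)) * E)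
      by (field; lra).
    assert (3 / 4 * (nu * nu * E) * E <= 3 / 4 * (a / b * (exp b - 1)) * E)
      by (rewrite Hnu2; apply Rmult_le_compat_r; lra).
    nra. }
  destruct (Rlt_le_dec nu (7 / 8)) as [Hn | Hn].
  - (* [1 - w/2 <= nu < 7/8] forces [w > 1/4]. *)
    assert (Hpoly : 0 <= 2 * w * (a - 1) + (32 / 7 * nu - 4) * b).
    { assert (0 <= 2 * w - (4 - 32 / 7 * nu)) by (destruct (Rle_lt_dec 2 w); unfold w in *; nra).
      unfold w in *; nra. }
    assert (Hgap : 0 <= 2 * w * exp_tangent_gap a + (32 / 7 * nu - 4) * b * E).
    { rewrite exp_tangent_gap_eq; fold E.
      assert (0 <= (2 * w * (a - 1) + (32 / 7 * nu - 4) * b) * E) by (apply Rmult_le_pos; lra).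
      unfold w in *; nra. }
    assert (0 <= 2 * w / b * exp_tangent_gap a + (32 / 7 * nu - 4) * E).
    { replace (2 * w / b * exp_tangent_gap a + (32 / 7 * nu - 4) * E)
        with ((2 * w * exp_tangent_gap a + (32 / 7 * nu - 4) * b * E) / b) by (field; lra).
      apply Rmult_le_pos; [lra | left; apply Rinv_0_lt_compat; lra]. }
    lra.
  - assert (0 <= 2 * w / b * exp_tangent_gap a)
      by (apply Rmult_le_pos; [left; apply Rdiv_lt_0_compat|]; unfold w in *; lra).
    nra.
Qed.

Lemma ln2_pos : 0 < ln 2.
Proof. rewrite <- ln_1; apply ln_increasing; lra. Qed.

Lemma pow2_exp x : pow2 x = exp (x * ln 2).
Proof. reflexivity. Qed.

Lemma pow2_gt1 x : 0 < x -> 1 < pow2 x.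
Proof.
  intros Hx; rewrite pow2_exp, <- exp_0; apply exp_increasing.
  assert (H := ln2_pos); nra.
Qed.

Lemma pow2_le x y : x <= y -> pow2 x <= pow2 y.
Proof. intros; unfold pow2; apply Rle_Rpower; lra. Qed.

Lemma g_sqr x : 0 < x ->
  g x ^ 2 = x / (pow2 x - 1) * exp_tangent_gap (x * ln 2) ^ 2.
Proof.
  intros Hx; assert (H1 := pow2_gt1 x Hx).
  assert (Hq : 0 <= x / (pow2 x - 1)) by (left; apply Rdiv_lt_0_compat; lra).
  unfold g, exp_tangent_gap; rewrite <- pow2_exp.
  replace (pow2 x * x * ln 2) with (x * ln 2 * pow2 x) by ring.
  rewrite Rpow_mult_distr, <- Rsqr_pow2, Rsqr_sqrt; [ring | exact Hq].
Qed.

Lemma Kmax_le_quarter rho_r rho_d rho_0 T : 4 * Kmax rho_r rho_d rho_0 T <= T.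
Proof.
  unfold Kmax; cbv zeta.
  match goal with |- 4 * Rmin _ ?m <= _ => assert (H := Rmin_l (T / 4) m) end; lra.
Qed.

Lemma Kmax_rho_0_le_rho_r rho_r rho_d rho_0 T : 0 < rho_r -> 0 < rho_0 ->
  3 * Kmax rho_r rho_d rho_0 T * rho_0 <= rho_r.
Proof.
  intros Hr H0; unfold Kmax; cbv zeta.
  set (k := Rmin _ _).
  assert (Hk : k <= 1 / (3 * (rho_0 / rho_r)))
    by (unfold k; eapply Rle_trans; [apply Rmin_r | apply Rmin_l]).
  replace (1 / (3 * (rho_0 / rho_r))) with (rho_r / (3 * rho_0)) in Hk by (field; lra).
  apply Rmult_le_compat_r with (r := 3 * rho_0) in Hk; [|lra].
  replace (rho_r / (3 * rho_0) * (3 * rho_0)) with rho_r in Hk by (field; lra).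
  lra.
Qed.

Lemma Kmax_rho_0_le_rho_d rho_r rho_d rho_0 T : 0 < rho_r -> 0 < rho_0 ->
  2 * Kmax rho_r rho_d rho_0 T * rho_0 <= 3 * rho_d.
Proof.
  intros Hr H0; unfold Kmax; cbv zeta.
  set (k := Rmin _ _).
  assert (Hk : k <= 3 * (rho_d / rho_r) / (2 * (rho_0 / rho_r)))
    by (unfold k; eapply Rle_trans; [apply Rmin_r | apply Rmin_r]).
  replace (3 * (rho_d / rho_r) / (2 * (rho_0 / rho_r))) with (3 * rho_d / (2 * rho_0)) in Hk
    by (field; lra).
  apply Rmult_le_compat_r with (r := 2 * rho_0) in Hk; [|lra].
  replace (3 * rho_d / (2 * rho_0) * (2 * rho_0)) with (3 * rho_d) in Hk by (field; lra).
  lra.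
Qed.

Lemma rho_s_condition alpha rho_r rho_s : 0 < rho_r -> 0 < rho_s ->
  rho_r > alpha / (2 * (rho_s / rho_r)) -> alpha < 2 * rho_s.
Proof.
  intros Hr Hs H.
  replace (alpha / (2 * (rho_s / rho_r))) with (alpha * / (2 * rho_s) * rho_r) in H by (field; lra).
  assert (Hq : alpha * / (2 * rho_s) < 1) by nra.
  apply Rmult_lt_compat_r with (r := 2 * rho_s) in Hq; [|lra].
  rewrite Rmult_assoc, Rinv_l in Hq by lra; lra.
Qed.

Lemma g_condition_tangent_gap Rr alpha rho_r rho_d K : 0 < Rr -> 0 < alpha -> 0 < rho_r ->
  0 < rho_d -> 0 < K ->
  rho_r > 3 * alpha / (4 * (1 + rho_d / rho_r) ^ 2 * Rr) * g (4 * Rr / (3 * K)) ^ 2 ->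
  alpha * rho_r * exp_tangent_gap (4 * Rr / (3 * K) * ln 2) ^ 2
  < (rho_r + rho_d) ^ 2 * K * (pow2 (4 * Rr / (3 * K)) - 1).
Proof.
  intros HR Ha Hr Hd HK H.
  assert (Hx : 0 < 4 * Rr / (3 * K)) by (apply Rdiv_lt_0_compat; lra).
  assert (HE := pow2_gt1 _ Hx).
  rewrite g_sqr in H by exact Hx.
  set (P := exp_tangent_gap (4 * Rr / (3 * K) * ln 2)) in *.
  set (E := pow2 (4 * Rr / (3 * K)) - 1) in *.
  assert (HE' : 0 < E) by (unfold E; lra).
  assert (0 < rho_d / rho_r) by (apply Rdiv_lt_0_compat; lra).
  replace (3 * alpha / (4 * (1 + rho_d / rho_r) ^ 2 * Rr) * (4 * Rr / (3 * K) / E * P ^ 2))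
    with (rho_r * (alpha * rho_r * P ^ 2 / ((rho_r + rho_d) ^ 2 * K * E))) in H
    by (field; repeat split; try lra; apply pow_nonzero; lra).
  assert (Hq : alpha * rho_r * P ^ 2 / ((rho_r + rho_d) ^ 2 * K * E) < 1) by nra.
  assert (0 < (rho_r + rho_d) ^ 2 * K * E)
    by (apply Rmult_lt_0_compat; [apply Rmult_lt_0_compat|]; nra).
  apply Rmult_lt_compat_r with (r := (rho_r + rho_d) ^ 2 * K * E) in Hq; [|lra].
  unfold Rdiv in Hq; rewrite Rmult_assoc, Rinv_l in Hq; lra.
Qed.

Section Design.

Variables Rr alpha rho_r rho_d rho_s rho_0 T : R.
Hypotheses (HR : 0 < Rr) (Halpha : 0 < alpha) (Hr : 0 < rho_r) (Hd : 0 < rho_d)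
  (Hs : 0 < rho_s) (H0 : 0 < rho_0).

Local Notation Km := (Kmax rho_r rho_d rho_0 T).

Definition power_csi (M K : R) : R :=
  alpha * K / (M - K) * (pow2 (Rr / K) - 1) + M * rho_r + K * rho_d + rho_s.

Definition power_zf (M K tau : R) : R :=
  alpha * K * gamma_u M K tau Rr T + rho_s
  + K * (rho_d + 8 * K ^ 2 * rho_0 / (3 * T))
  + M * (rho_r + 2 * K * rho_0 + 4 * K ^ 2 * rho_0 / T).

Definition csi_root (K : R) : R := sqrt (alpha * rho_r * (K * (pow2 (Rr / K) - 1))).

Definition power_csi_opt (K : R) : R := 2 * csi_root K + K * (rho_r + rho_d) + rho_s.

Lemma zeta_zf_power M K tau :
  zeta_zf M K tau Rr alpha rho_r rho_d rho_s rho_0 T = Rr / power_zf M K tau.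
Proof. reflexivity. Qed.

Lemma zeta_csi_power M K : 0 < power_csi M K ->
  zeta_csi M K Rr alpha rho_r rho_d rho_s = Rr / power_csi M K.
Proof. intros Hp; unfold zeta_csi; fold (power_csi M K); field; lra. Qed.

Lemma pow2_div_sub1_pos K : 0 < K -> 0 < pow2 (Rr / K) - 1.
Proof. intros HK; assert (H := pow2_gt1 (Rr / K) ltac:(apply Rdiv_lt_0_compat; lra)); lra. Qed.

Lemma power_csi_opt_gt K : 0 < K -> rho_s < power_csi_opt K.
Proof.
  intros HK; unfold power_csi_opt.
  assert (H := sqrt_pos (alpha * rho_r * (K * (pow2 (Rr / K) - 1)))); fold (csi_root K) in H.
  nra.
Qed.

Lemma power_csi_opt_le M K : 0 < K < M -> power_csi_opt K <= power_csi M K.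
Proof.
  intros [HK HM]; unfold power_csi_opt, csi_root, power_csi.
  assert (HE := pow2_div_sub1_pos K HK).
  set (E := pow2 (Rr / K) - 1) in *.
  assert (Hx : 0 <= alpha * K / (M - K) * E)
    by (left; apply Rmult_lt_0_compat; [apply Rdiv_lt_0_compat|]; nra).
  assert (H := two_sqrt_mul_le_add _ ((M - K) * rho_r) Hx ltac:(nra)).
  replace (alpha * K / (M - K) * E * ((M - K) * rho_r)) with (alpha * rho_r * (K * E)) in H
    by (field; lra).
  lra.
Qed.

Lemma power_csi_opt_attained K : 0 < K -> exists M, K < M /\ power_csi M K = power_csi_opt K.
Proof.
  intros HK; assert (HE := pow2_div_sub1_pos K HK).
  set (x := alpha * K * (pow2 (Rr / K) - 1)).
  assert (Hx : 0 < x) by (unfold x; apply Rmult_lt_0_compat; nra).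
  destruct (sqrt_balance x rho_r Hx Hr) as [B1 B2].
  assert (Hm : 0 < sqrt (x / rho_r)) by (apply sqrt_lt_R0, Rdiv_lt_0_compat; lra).
  exists (K + sqrt (x / rho_r)); split; [lra|].
  unfold power_csi, power_csi_opt, csi_root.
  replace (K + sqrt (x / rho_r) - K) with (sqrt (x / rho_r)) by ring.
  replace (alpha * K / sqrt (x / rho_r) * (pow2 (Rr / K) - 1))
    with (alpha * K * (pow2 (Rr / K) - 1) / sqrt (x / rho_r)) by (field; lra).
  fold x.
  replace (alpha * rho_r * (K * (pow2 (Rr / K) - 1))) with (x * rho_r) by (unfold x; ring).
  rewrite B1, <- B2; ring.
Qed.

Lemma power_csi_opt_continuous K : 0 < K -> continuity_pt power_csi_opt K.
Proof.
  intros HK.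
  set (h := fun K => alpha * rho_r * (K * (exp (Rr / K * ln 2) - 1))).
  assert (Hh : continuity_pt h K) by (apply derivable_continuous_pt; unfold h; reg; lra).
  assert (Hh0 : 0 <= h K).
  { assert (H := pow2_div_sub1_pos K HK); rewrite pow2_exp in H.
    unfold h; apply Rmult_le_pos; [nra | apply Rmult_le_pos; lra]. }
  assert (Hsq : continuity_pt (comp sqrt h) K)
    by (apply continuity_pt_comp; [exact Hh | apply continuity_pt_sqrt; exact Hh0]).
  replace power_csi_opt with (fun K => 2 * comp sqrt h K + K * (rho_r + rho_d) + rho_s)
    by (apply functional_extensionality; reflexivity).
  apply continuity_pt_plus; [apply continuity_pt_plus|].
  - apply continuity_pt_mult; [apply continuity_pt_const; intros ?; reflexivity | exact Hsq].
  - apply continuity_pt_mult; [apply derivable_continuous_pt; reg |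
                               apply continuity_pt_const; intros ?; reflexivity].
  - apply continuity_pt_const; intros ?; reflexivity.
Qed.

Lemma gamma_u_bounds M K tau : 0 < K <= tau -> tau < T -> K < M ->
  let E := pow2 (Rr / (K * (1 - tau / T))) - 1 in
  (K + tau) / (tau * (M - K)) * E <= gamma_u M K tau Rr T
  <= (K + tau) / (tau * (M - K)) * E + 1 / (K + tau).
Proof.
  intros HK Ht HM E.
  assert (HT : 0 < T) by lra.
  assert (Hq : 0 < 1 - tau / T).
  { apply Rlt_0_minus; apply Rmult_lt_reg_r with T; [lra|]; field_simplify; lra. }
  assert (HE : 0 < E) by (unfold E; assert (H := pow2_gt1 (Rr / (K * (1 - tau / T)))
                                              ltac:(apply Rdiv_lt_0_compat; nra)); lra).
  set (c := (K + tau) / (2 * tau * (M - K)) * E).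
  assert (Hc : 0 <= c) by (left; apply Rmult_lt_0_compat; [apply Rdiv_lt_0_compat|]; nra).
  assert (Hg : gamma_u M K tau Rr T = c + sqrt (c ^ 2 + 2 * c * (1 / (K + tau)))).
  { unfold gamma_u; fold E; fold c; do 2 f_equal; unfold c; field; lra. }
  destruct (sqrt_quadratic_bounds c (1 / (K + tau)) Hc ltac:(left; apply Rdiv_lt_0_compat; lra)).
  replace ((K + tau) / (tau * (M - K)) * E) with (2 * c) by (unfold c; field; lra).
  rewrite Hg; lra.
Qed.

Lemma power_zf_ge_csi M K tau : 1 <= K <= tau -> tau < T -> K < M ->
  power_csi M K + 2 * rho_0 <= power_zf M K tau.
Proof.
  intros HK Ht HM.
  assert (HT : 0 < T) by lra.
  destruct (gamma_u_bounds M K tau ltac:(lra) Ht HM) as [Hg _].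
  set (E' := pow2 (Rr / (K * (1 - tau / T))) - 1) in Hg.
  assert (Hq : 0 < 1 - tau / T <= 1).
  { split; [apply Rlt_0_minus; apply Rmult_lt_reg_r with T; [lra|]; field_simplify; lra|].
    assert (0 < tau / T) by (apply Rdiv_lt_0_compat; lra); lra. }
  assert (HEE : pow2 (Rr / K) - 1 <= E').
  { unfold E'; apply Rplus_le_compat_r, pow2_le; unfold Rdiv.
    apply Rmult_le_compat_l; [lra | apply Rinv_le_contravar; nra]. }
  assert (Hgam : (pow2 (Rr / K) - 1) / (M - K) <= gamma_u M K tau Rr T).
  { eapply Rle_trans; [|exact Hg].
    replace ((K + tau) / (tau * (M - K)) * E') with ((1 + K / tau) * (E' / (M - K)))
      by (field; lra).
    assert (0 < K / tau) by (apply Rdiv_lt_0_compat; lra).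
    assert (HE : 0 < pow2 (Rr / K) - 1) by (apply pow2_div_sub1_pos; lra).
    assert ((pow2 (Rr / K) - 1) / (M - K) <= E' / (M - K))
      by (unfold Rdiv; apply Rmult_le_compat_r; [left; apply Rinv_0_lt_compat|]; lra).
    assert (0 < E' / (M - K)) by (apply Rdiv_lt_0_compat; lra).
    nra. }
  assert (alpha * K / (M - K) * (pow2 (Rr / K) - 1) <= alpha * K * gamma_u M K tau Rr T).
  { replace (alpha * K / (M - K) * (pow2 (Rr / K) - 1))
      with (alpha * K * ((pow2 (Rr / K) - 1) / (M - K))) by (field; lra).
    apply Rmult_le_compat_l; nra. }
  assert (0 <= 8 * K ^ 2 * rho_0 / (3 * T))
    by (apply Rmult_le_pos; [nra | left; apply Rinv_0_lt_compat; lra]).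
  assert (0 <= 4 * K ^ 2 * rho_0 / T)
    by (apply Rmult_le_pos; [nra | left; apply Rinv_0_lt_compat; lra]).
  assert (0 <= K * (8 * K ^ 2 * rho_0 / (3 * T))) by (apply Rmult_le_pos; lra).
  assert (0 <= M * (4 * K ^ 2 * rho_0 / T)) by (apply Rmult_le_pos; lra).
  assert (1 <= M * K) by nra.
  assert (2 * rho_0 <= M * (2 * K * rho_0)) by nra.
  unfold power_csi, power_zf; nra.
Qed.

Lemma power_zf_quarter_le K d : 1 <= K <= Km -> 0 < d ->
  power_zf (K + d) K (T / 4) <= 2 * alpha * K * (pow2 (4 * Rr / (3 * K)) - 1) / d
                                + 2 * d * rho_r + 2 * K * (rho_r + rho_d) + alpha / 2 + rho_s.
Proof.
  intros HK Hdpos.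
  assert (HT4 := Kmax_le_quarter rho_r rho_d rho_0 T).
  assert (Hr3 := Kmax_rho_0_le_rho_r rho_r rho_d rho_0 T Hr H0).
  assert (Hd3 := Kmax_rho_0_le_rho_d rho_r rho_d rho_0 T Hr H0).
  assert (HT : 0 < T) by lra.
  destruct (gamma_u_bounds (K + d) K (T / 4) ltac:(lra) ltac:(lra) ltac:(lra)) as [_ Hg].
  replace (Rr / (K * (1 - T / 4 / T))) with (4 * Rr / (3 * K)) in Hg by (field; lra).
  replace (K + d - K) with d in Hg by ring.
  set (E := pow2 (4 * Rr / (3 * K)) - 1) in *.
  assert (HE : 0 < E) by (unfold E; assert (H := pow2_gt1 (4 * Rr / (3 * K))
                                              ltac:(apply Rdiv_lt_0_compat; lra)); lra).
  assert (Hgam : alpha * K * gamma_u (K + d) K (T / 4) Rr T <= 2 * alpha * K * E / d + alpha / 2).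
  { apply Rle_trans with (alpha * K * ((K + T / 4) / (T / 4 * d) * E + 1 / (K + T / 4)));
      [apply Rmult_le_compat_l; nra|].
    replace (alpha * K * ((K + T / 4) / (T / 4 * d) * E + 1 / (K + T / 4)))
      with (alpha * K * E / d * (1 + K / (T / 4)) + alpha * (K / (K + T / 4))) by (field; lra).
    assert (K / (T / 4) <= 1) by (apply Rmult_le_reg_r with (T / 4); [lra|]; field_simplify; lra).
    assert (K / (K + T / 4) <= 1 / 2)
      by (apply Rmult_le_reg_r with (K + T / 4); [lra|]; field_simplify; lra).
    assert (0 < alpha * K * E / d)
      by (apply Rdiv_lt_0_compat; [apply Rmult_lt_0_compat; nra | lra]).
    replace (2 * alpha * K * E / d) with (2 * (alpha * K * E / d)) by (field; lra).
    nra. }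
  assert (HKK : K ^ 2 <= Km ^ 2) by nra.
  assert (8 * K ^ 2 * rho_0 / (3 * T) <= rho_d).
  { apply Rmult_le_reg_r with (3 * T); [lra|]; field_simplify; [|lra]. nra. }
  assert (4 * K ^ 2 * rho_0 / T <= rho_r / 3).
  { apply Rmult_le_reg_r with T; [lra|]; field_simplify; [|lra]. nra. }
  assert (2 * K * rho_0 <= 2 * rho_r / 3) by nra.
  unfold power_zf; nra.
Qed.

Lemma power_zf_quarter_opt K : 1 <= K <= Km -> exists M, K < M /\
  power_zf M K (T / 4) <= 4 * sqrt (alpha * rho_r * (K * (pow2 (4 * Rr / (3 * K)) - 1)))
                         + 2 * K * (rho_r + rho_d) + alpha / 2 + rho_s.
Proof.
  intros HK.
  assert (HE := pow2_gt1 (4 * Rr / (3 * K)) ltac:(apply Rdiv_lt_0_compat; lra)).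
  set (x := alpha * K * (pow2 (4 * Rr / (3 * K)) - 1)).
  assert (Hx : 0 < x) by (unfold x; apply Rmult_lt_0_compat; nra).
  destruct (sqrt_balance x rho_r Hx Hr) as [B1 B2].
  assert (Hm : 0 < sqrt (x / rho_r)) by (apply sqrt_lt_R0, Rdiv_lt_0_compat; lra).
  exists (K + sqrt (x / rho_r)); split; [lra|].
  eapply Rle_trans; [apply power_zf_quarter_le; assumption|].
  replace (2 * alpha * K * (pow2 (4 * Rr / (3 * K)) - 1) / sqrt (x / rho_r))
    with (2 * (alpha * K * (pow2 (4 * Rr / (3 * K)) - 1) / sqrt (x / rho_r))) by (field; lra).
  replace (alpha * rho_r * (K * (pow2 (4 * Rr / (3 * K)) - 1))) with (x * rho_r)
    by (unfold x; ring).
  fold x; rewrite B1.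
  replace (2 * sqrt (x / rho_r) * rho_r) with (2 * (sqrt (x / rho_r) * rho_r)) by ring.
  rewrite B2; lra.
Qed.

Hypothesis HKm : 1 <= Km.
Hypothesis HD2 : alpha * rho_r * exp_tangent_gap (4 * Rr / (3 * Km) * ln 2) ^ 2
                 < (rho_r + rho_d) ^ 2 * Km * (pow2 (4 * Rr / (3 * Km)) - 1).

Lemma csi_root_near_Kmax Ks : 3 * Km / 4 < Ks <= Km ->
  4 * sqrt (alpha * rho_r * (Km * (pow2 (4 * Rr / (3 * Km)) - 1))) + 2 * Km * (rho_r + rho_d)
  <= 16 / 3 * csi_root Ks + 8 / 3 * Ks * (rho_r + rho_d).
Proof.
  intros HKs; unfold csi_root.
  set (A := alpha * rho_r) in *; set (L := rho_r + rho_d) in *.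
  set (a := 4 * Rr / (3 * Km) * ln 2); set (b := Rr / Ks * ln 2).
  rewrite !pow2_exp in *; fold a in HD2 |- *; fold b.
  set (P := exp_tangent_gap a) in HD2.
  assert (Hln := ln2_pos).
  assert (HA : 0 < A) by (unfold A; nra).
  assert (HL : 0 < L) by (unfold L; lra).
  assert (Hb : 0 < b) by (unfold b; apply Rmult_lt_0_compat; [apply Rdiv_lt_0_compat|]; lra).
  assert (Hab : a * Km * 3 = 4 * b * Ks) by (unfold a, b; field; lra).
  assert (HKs_eq : Ks = a * Km * 3 / (4 * b)) by (rewrite Hab; field; lra).
  assert (Hba : b < a) by nra.
  assert (Ha4 : 4 * (a - b) <= a) by nra.
  assert (HEa : 0 < exp a - 1) by (rewrite <- exp_0; apply Rlt_0_minus, exp_increasing; lra).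
  assert (HEb : 0 < exp b - 1) by (rewrite <- exp_0; apply Rlt_0_minus, exp_increasing; lra).
  set (S1 := sqrt (A * (Ks * (exp b - 1)))); set (S2 := sqrt (A * (Km * (exp a - 1)))).
  set (Q := 3 * a / (4 * b) * (exp b - 1) * (exp a - 1)).
  assert (HX2 : 0 < A * (Km * (exp a - 1))) by (apply Rmult_lt_0_compat; nra).
  assert (HX1 : 0 < A * (Ks * (exp b - 1))) by (apply Rmult_lt_0_compat; nra).
  assert (HS2 : S2 * S2 = A * Km * (exp a - 1)) by (unfold S2; rewrite sqrt_sqrt; [ring | lra]).
  assert (HS2pos : 0 < S2) by (unfold S2; apply sqrt_lt_R0; lra).
  assert (HS12 : S1 * S2 = A * Km * sqrt Q).
  { unfold S1, S2; rewrite <- sqrt_mult by nra.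
    replace (A * (Ks * (exp b - 1)) * (A * (Km * (exp a - 1)))) with ((A * Km) * (A * Km) * Q)
      by (unfold Q; rewrite HKs_eq; field; lra).
    rewrite sqrt_mult, sqrt_square; [ring | nra | nra | unfold Q; apply Rmult_le_pos; [|lra];
                                     apply Rmult_le_pos; [left; apply Rdiv_lt_0_compat|]; lra]. }
  assert (HLP : A * P <= L * S2).
  { assert (HP : 0 <= P) by apply exp_tangent_gap_ge0.
    apply Rsqr_incr_0; [unfold Rsqr | nra | nra].
    replace (L * S2 * (L * S2)) with (A * (L ^ 2 * Km * (exp a - 1)))
      by (transitivity (L ^ 2 * (S2 * S2)); [rewrite HS2; ring | ring]).
    replace (A * P * (A * P)) with (A * (A * P ^ 2)) by ring.
    apply Rmult_le_compat_l; lra. }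
  assert (Hgap := exp_gap_ineq a b Hb Hba Ha4); fold P Q in Hgap.
  assert (HD : 2 * Km * (a - b) / b = 8 / 3 * Ks - 2 * Km) by (rewrite HKs_eq; field; lra).
  apply Rmult_le_reg_r with S2; [exact HS2pos|].
  assert (A * Km * (4 * (exp a - 1)) <= A * Km * (2 * (a - b) / b * P + 16 / 3 * sqrt Q))
    by (apply Rmult_le_compat_l; nra).
  replace (A * Km * (2 * (a - b) / b * P + 16 / 3 * sqrt Q))
    with (2 * Km * (a - b) / b * (A * P) + 16 / 3 * (A * Km * sqrt Q)) in H by (field; lra).
  rewrite HD, <- HS12 in H.
  assert ((8 / 3 * Ks - 2 * Km) * (A * P) <= (8 / 3 * Ks - 2 * Km) * (L * S2))
    by (apply Rmult_le_compat_l; lra).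
  nra.
Qed.

Hypothesis Hrho_s : alpha < 2 * rho_s.

Lemma zf_point_below Ks : 1 <= Ks <= Km -> exists M K tau,
  (1 <= K <= Km) /\ (K <= tau < T) /\ M > K /\ power_zf M K tau < 8 / 3 * power_csi_opt Ks.
Proof.
  intros HKs.
  assert (HT4 := Kmax_le_quarter rho_r rho_d rho_0 T).
  assert (HS1 := sqrt_pos (alpha * rho_r * (Ks * (pow2 (Rr / Ks) - 1)))); fold (csi_root Ks) in HS1.
  destruct (Rle_lt_dec Ks (3 * Km / 4)) as [Hc | Hc].
  - destruct (power_zf_quarter_opt (4 * Ks / 3) ltac:(lra)) as [M [HM Hle]].
    exists M, (4 * Ks / 3), (T / 4); do 3 (split; [lra|]).
    replace (4 * Rr / (3 * (4 * Ks / 3))) with (Rr / Ks) in Hle by (field; lra).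
    assert (sqrt (alpha * rho_r * (4 * Ks / 3 * (pow2 (Rr / Ks) - 1))) <= 4 / 3 * csi_root Ks).
    { apply sqrt_le_of_le_sqr; [lra|].
      replace (4 / 3 * csi_root Ks * (4 / 3 * csi_root Ks))
        with (16 / 9 * (csi_root Ks * csi_root Ks)) by field.
      assert (HE := pow2_div_sub1_pos Ks ltac:(lra)).
      unfold csi_root; rewrite sqrt_sqrt; [|apply Rmult_le_pos; nra].
      assert (0 <= alpha * rho_r * (Ks * (pow2 (Rr / Ks) - 1))) by (apply Rmult_le_pos; nra).
      nra. }
    unfold power_csi_opt; nra.
  - destruct (power_zf_quarter_opt Km ltac:(lra)) as [M [HM Hle]].
    exists M, Km, (T / 4); do 3 (split; [lra|]).
    assert (H := csi_root_near_Kmax Ks ltac:(lra)).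
    unfold power_csi_opt; nra.
Qed.

Lemma power_csi_opt_min : exists Ks, 1 <= Ks <= Km /\
  forall K, 1 <= K <= Km -> power_csi_opt Ks <= power_csi_opt K.
Proof.
  destruct (continuity_ab_min power_csi_opt 1 Km HKm) as [Ks [Hmin HKs]];
    [intros c Hc; apply power_csi_opt_continuous; lra|].
  exists Ks; auto.
Qed.

Section Minimizer.

Variable Ks : R.
Hypothesis HKs : 1 <= Ks <= Km.
Hypothesis HKs_min : forall K, 1 <= K <= Km -> power_csi_opt Ks <= power_csi_opt K.

Lemma is_zeta'_csi_opt : is_zeta'_csi Rr alpha rho_r rho_d rho_s rho_0 T (Rr / power_csi_opt Ks).
Proof.
  assert (Hf := power_csi_opt_gt Ks ltac:(lra)).
  split.
  - destruct (power_csi_opt_attained Ks ltac:(lra)) as [M [HM Heq]].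
    exists M, Ks; do 2 (split; [lra|]).
    rewrite zeta_csi_power, Heq; [reflexivity | lra].
  - intros z [M [K [HK [HM ->]]]].
    assert (H := power_csi_opt_le M K ltac:(lra)).
    assert (H' := HKs_min K HK).
    rewrite zeta_csi_power by lra; apply Rdiv_le_contravar; lra.
Qed.

Lemma zf_values_le z : zf_values Rr alpha rho_r rho_d rho_s rho_0 T z ->
  z <= Rr / (power_csi_opt Ks + 2 * rho_0).
Proof.
  intros [M [K [tau [HK [Ht [HM ->]]]]]].
  assert (Hf := power_csi_opt_gt Ks ltac:(lra)).
  assert (H1 := power_zf_ge_csi M K tau ltac:(lra) ltac:(lra) HM).
  assert (H2 := power_csi_opt_le M K ltac:(lra)).
  assert (H3 := HKs_min K HK).
  rewrite zeta_zf_power; apply Rdiv_le_contravar; lra.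
Qed.

Lemma is_zeta'_zf_bounds : exists z, is_zeta'_zf Rr alpha rho_r rho_d rho_s rho_0 T z /\
  Rr / (8 / 3 * power_csi_opt Ks) < z <= Rr / (power_csi_opt Ks + 2 * rho_0).
Proof.
  destruct (zf_point_below Ks HKs) as [M [K [tau [HK [Ht [HM Hbelow]]]]]].
  assert (Hin : zf_values Rr alpha rho_r rho_d rho_s rho_0 T
                  (zeta_zf M K tau Rr alpha rho_r rho_d rho_s rho_0 T)) by (exists M, K, tau; auto).
  destruct (completeness (zf_values Rr alpha rho_r rho_d rho_s rho_0 T))
    as [z [Hub Hleast]];
    [exists (Rr / (power_csi_opt Ks + 2 * rho_0)); exact zf_values_le | eauto |].
  exists z; split; [split; assumption|]; split.
  - assert (Hp := power_zf_ge_csi M K tau ltac:(lra) ltac:(lra) HM).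
    assert (Hc := power_csi_opt_le M K ltac:(lra)).
    assert (Hf := power_csi_opt_gt K ltac:(lra)).
    eapply Rlt_le_trans; [|apply Hub, Hin].
    rewrite zeta_zf_power; apply Rdiv_lt_contravar; lra.
  - apply Hleast; exact zf_values_le.
Qed.

End Minimizer.

End Design.

Lemma ratio_bounds Rr f z : 0 < Rr -> 0 < f ->
  Rr / (8 / 3 * f) < z -> z < Rr / f -> 3 / 8 < z / (Rr / f) < 1.
Proof.
  intros HR Hf Hlo Hhi.
  assert (Hc : 0 < Rr / f) by (apply Rdiv_lt_0_compat; lra).
  replace (Rr / (8 / 3 * f)) with (3 / 8 * (Rr / f)) in Hlo by (field; lra).
  replace z with (z / (Rr / f) * (Rr / f)) in Hlo, Hhi by (field; lra).
  split; nra.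
Qed.

Theorem theorem4 (Rr alpha rho_r rho_d rho_s rho_0 T : R) :
  Rr > 0 -> alpha > 1 -> rho_r > 0 -> rho_d > 0 -> rho_s > 0 -> rho_0 > 0 ->
  T > 1 ->
  let beta := rho_d / rho_r in
  let delta := rho_s / rho_r in
  let Km := Kmax rho_r rho_d rho_0 T in
  (* (A) *) Km > 10 ->
  (* (D.1) *) rho_r > alpha / (2 * delta) ->
  (* (D.2) *) rho_r > 3 * alpha / (4 * (1 + beta) ^ 2 * Rr) * (g (4 * Rr / (3 * Km))) ^ 2 ->
  (* (D.3) *) rho_r < alpha / (1 + beta) ^ 2 * ((g Rr) ^ 2 / Rr) ->
  exists zzf zcsi : R,
    is_zeta'_zf Rr alpha rho_r rho_d rho_s rho_0 T zzf /\
    is_zeta'_csi Rr alpha rho_r rho_d rho_s rho_0 T zcsi /\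
    3 / 8 < zzf / zcsi < 1.
Proof.
  intros HR Ha Hr Hd Hs H0 _ beta delta Km HA HD1 HD2 _.
  assert (HKm : 1 <= Km) by lra.
  assert (Hrho_s := rho_s_condition alpha rho_r rho_s Hr Hs HD1).
  assert (HD2' := g_condition_tangent_gap Rr alpha rho_r rho_d Km
                    HR ltac:(lra) Hr Hd ltac:(lra) HD2).
  destruct (power_csi_opt_min Rr alpha rho_r rho_d rho_s rho_0 T HR ltac:(lra) Hr HKm)
    as [Ks [HKs HKs_min]].
  edestruct (is_zeta'_zf_bounds Rr alpha rho_r rho_d rho_s rho_0 T) as [z [Hz [Hlo Hhi]]];
    try eassumption; try lra.
  set (f := power_csi_opt Rr alpha rho_r rho_d rho_s Ks) in *.
  assert (Hf : rho_s < f) by (apply power_csi_opt_gt; lra).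
  exists z, (Rr / f); split; [exact Hz|]; split.
  - apply is_zeta'_csi_opt; assumption || lra.
  - apply ratio_bounds; [lra | lra | exact Hlo|].
    eapply Rle_lt_trans; [exact Hhi | apply Rdiv_lt_contravar; lra].
Qed.
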